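(* Let $R$ be a commutative ring, let $n$ be a power of $2$, and let $A,B\in R[x]$ be polynomials of degree $n-1$. For an integer $m\ge1$ write $\ell(m)=\lfloor\log_2 m\rfloor$. Then $$A(x)B(x)=\frac{1-x^n}{1-x}\bigl(A(x)\odot B(x)\bigr)-\sum_{m=1}^{n-1}\frac{1-x^{2^{\ell(m)}}}{(1-x)\,x^m}\,U_m(x)\,V_m(x),$$ where $$U_m(x)=\Bigl(\frac{(1-x^n)\,x^m}{1-x^{2^{\ell(m)+1}}}\Bigr)\odot\Bigl(\bigl(1-x^{2^{\ell(m)}}\bigr)A(x)\Bigr),\qquad V_m(x)=\Bigl(\frac{(1-x^n)\,x^m}{1-x^{2^{\ell(m)+1}}}\Bigr)\odot\Bigl(\bigl(1-x^{2^{\ell(m)}}\bigr)B(x)\Bigr).$$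
   Context: For formal power series (in particular polynomials) $P=\sum_i p_ix^i$ and $Q=\sum_i q_ix^i$, the termwise product is $P\odot Q=\sum_i p_iq_ix^i$. The quotients $\frac{1-x^n}{1-x}=1+x+\dots+x^{n-1}$, $\frac{1-x^n}{1-x^{2^{j}}}=\sum_{i=0}^{n/2^j-1}x^{i2^j}$ (for $2^j\le n$) and $\frac{1-x^{2^j}}{1-x}=1+x+\dots+x^{2^j-1}$ denote the corresponding polynomials; the division by $x^m$ is exact since $U_m$ and $V_m$ are divisible by $x^m$. *)

From mathcomp Require Import all_boot all_order all_algebra.
Set Implicit Arguments. Unset Strict Implicit. Unset Printing Implicit Defensive.
Import GRing.Theory.
Local Open Scope ring_scope.

Definition hadamard (R : comNzRingType) (p q : {poly R}) : {poly R} :=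
  \poly_(i < size p) (p`_i * q`_i).

(* (1 - x^N)/(1 - x) = 1 + x + ... + x^(N-1) *)
Definition geomX (R : comNzRingType) (N : nat) : {poly R} := \sum_(i < N) 'X^i.

(* (1 - x^N)/(1 - x^(2^j)) = sum_{i=0}^{N/2^j - 1} x^(i 2^j)  (for 2^j | N) *)
Definition geomStep (R : comNzRingType) (N j : nat) : {poly R} :=
  \sum_(i < N %/ 2 ^ j) 'X^(i * 2 ^ j).

Definition ell (m : nat) : nat := trunc_log 2 m.

Definition UV (R : comNzRingType) (n m : nat) (P : {poly R}) : {poly R} :=
  hadamard ('X^m * geomStep R n (ell m).+1) ((1 - 'X^(2 ^ ell m)) * P).

From mathcomp Require Import all_boot all_order all_algebra zify ring.
From HB Require Import structures.
Set Implicit Arguments.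
Unset Strict Implicit.
Unset Printing Implicit Defensive.
Import GRing.Theory.

(* Both sides are bilinear and symmetric in (A, B), so it suffices to take
   A = x^s and B = x^t with s, t < n.  Fix a level l, put L = 2^l and let m
   range over [L, 2L), where ell m = l.  Then U_m(x^s) vanishes unless
   m = L + (s mod L), in which case it is x^s or -x^(s+L) according as bit l
   of s is 1 or 0.  Hence level l of the correction sum equals c(l+1) - c(l),
   where
     c(l) = [s = t mod 2^l] x^(s + t - (s mod 2^l)) (1 + x + ... + x^(2^l-1)),
   and the whole sum telescopes to
     c(k) - c(0) = [s = t] (1 + x + ... + x^(n-1)) x^s - x^(s+t). *)

Lemma dvdn_subn_modn d m i : m < d -> m <= i -> (d %| i - m) = (i %% d == m).
Proof.
move=> m_lt m_le; apply/idP/eqP => [/dvdnP[c ci]|im].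
  by rewrite -(subnK m_le) ci modnMDl modn_small.
by rewrite {1}(divn_eq i d) im addnK dvdn_mull.
Qed.

Lemma modn_double_bit s L :
  s %% (2 * L) = (if odd (s %/ L) then L else 0) + s %% L.
Proof.
rewrite {1}(divn_eq (s %% (2 * L)) L) -modn_divl modn2 modn_dvdm ?dvdn_mull //.
by case: odd; rewrite ?mul1n.
Qed.

Lemma modn_double_shift s L : 0 < L ->
  (L + s) %% (2 * L) = (if odd (s %/ L) then 0 else L) + s %% L.
Proof.
move=> L_gt0; rewrite modn_double_bit modnDl divnDl ?dvdnn // divnn L_gt0 add1n /=.
by case: odd.
Qed.

Local Open Scope ring_scope.

Lemma big_nat_dyadic (V : nmodType) k (F : nat -> V) :
  \sum_(1 <= m < 2 ^ k) F m = \sum_(0 <= l < k) \sum_(2 ^ l <= m < 2 ^ l.+1) F m.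
Proof.
elim: k => [|k IH]; first by rewrite expn0 !big_geq.
by rewrite big_nat_recr //= -IH (@big_cat_nat _ _ _ (2 ^ k)) ?expn_gt0 ?leq_exp2l.
Qed.

Lemma linear_poly_eq0 (R : nzRingType) (V : lmodType R) (f : {poly R} -> V) n
    (p : {poly R}) :
  linear f -> (size p <= n)%N -> (forall s, (s < n)%N -> f 'X^s = 0) -> f p = 0.
Proof.
move=> f_lin p_le f_X; rewrite -(coefK p) poly_def.
elim/big_rec: _ => [|s q _ fq0].
  by have := f_lin (-1) 0 0; rewrite scaler0 addr0 scaleN1r addNr.
by rewrite f_lin fq0 f_X ?scaler0 ?addr0 // (leq_trans (ltn_ord s)).
Qed.

Lemma symmetric_bilinear_poly_eq0 (R : nzRingType) (V : lmodType R)
    (F : {poly R} -> {poly R} -> V) n (p q : {poly R}) :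
  (forall q, linear (F ^~ q)) -> (forall p q, F p q = F q p) ->
  (size p <= n)%N -> (size q <= n)%N ->
  (forall s t, (s < n)%N -> (t < n)%N -> F 'X^s 'X^t = 0) -> F p q = 0.
Proof.
move=> F_lin F_sym p_le q_le F_X.
apply: (linear_poly_eq0 (F_lin q) p_le) => s s_lt; rewrite F_sym.
by apply: (linear_poly_eq0 (F_lin _) q_le) => t t_lt; rewrite F_sym F_X.
Qed.

Section Hadamard.
Variable R : comNzRingType.
Implicit Types p q : {poly R}.

Lemma coef_hadamard p q i : (hadamard p q)`_i = p`_i * q`_i.
Proof. by rewrite coef_poly; case: ltnP => // /(nth_default 0) ->; rewrite mul0r. Qed.

Lemma hadamardC p q : hadamard p q = hadamard q p.
Proof. by apply/polyP => i; rewrite !coef_hadamard mulrC. Qed.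

Lemma hadamard_is_linear p : linear (hadamard p).
Proof.
by move=> a u v; apply/polyP => i; rewrite !(coefD, coefZ, coef_hadamard) mulrDr mulrCA.
Qed.

HB.instance Definition _ p :=
  GRing.isLinear.Build R {poly R} {poly R} *:%R (hadamard p) (hadamard_is_linear p).

Lemma hadamardXn p j : hadamard p 'X^j = p`_j *: 'X^j.
Proof.
apply/polyP => i; rewrite coef_hadamard coefZ coefXn.
by case: eqP => [->|]; rewrite ?mulr1 ?mulr0.
Qed.

End Hadamard.

Section MonomialIdentity.
Variable R : comNzRingType.

Lemma geomX_add a b : geomX R (a + b) = geomX R a + 'X^a * geomX R b.
Proof.
rewrite /geomX big_split_ord /= mulr_sumr.
by congr (_ + _); apply: eq_bigr => i _; rewrite exprD.
Qed.

Lemma geomX1 : geomX R 1 = 1.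
Proof. by rewrite /geomX big_ord1. Qed.

Lemma drop_polyXn m e : (m <= e)%N -> drop_poly m ('X^e : {poly R}) = 'X^(e - m).
Proof.
move=> m_le; rewrite -['X^e]mul1r drop_polyMXn.
by rewrite (_ : m - e = 0)%N ?drop_poly0l ?mul1r //; lia.
Qed.

Lemma coef_sum_Xn_mul M d i : (0 < d)%N ->
  (\sum_(a < M) ('X^(a * d) : {poly R}))`_i = ((i < M * d) && (d %| i))%N%:R.
Proof.
move=> d_gt0; elim: M => [|M IH]; first by rewrite big_ord0 coef0.
rewrite big_ord_recr /= coefD IH coefXn mulSn.
case: (ltnP i (M * d)%N) => [lt|ge]; first by rewrite ltn_addl // (ltn_eqF lt) addr0.
case: (eqVneq i (M * d)%N) => [->|ne].
  by rewrite dvdn_mull // -[X in (X < _)%N]add0n ltn_add2r d_gt0 add0r.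
suff -> : ((i < d + M * d) && (d %| i))%N = false by rewrite addr0.
apply/negbTE/andP => -[lt /dvdnP[c ci]]; move: ne ge lt.
by rewrite ci -mulSn eqn_pmul2r // leq_pmul2r // ltn_pmul2r //; lia.
Qed.

Lemma coef_XnM_geomStep N j m i : (2 ^ j %| N)%N -> (m < 2 ^ j)%N -> (i < N + m)%N ->
  ('X^m * geomStep R N j)`_i = (i %% 2 ^ j == m)%N%:R.
Proof.
move=> dvd_N m_lt i_lt; rewrite coefXnM /geomStep coef_sum_Xn_mul ?expn_gt0 // divnK //.
case: ltnP => [i_lt_m|m_le_i]; first by rewrite modn_small ?(ltn_trans i_lt_m) ?ltn_eqF.
by rewrite dvdn_subn_modn // (_ : i - m < N)%N //; lia.
Qed.

Definition level_image (L s : nat) : {poly R} :=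
  if odd (s %/ L) then 'X^s else - 'X^(L + s).

Lemma UV_Xn n l m s : (2 ^ l.+1 %| n)%N -> (2 ^ l <= m < 2 ^ l.+1)%N -> (s < n)%N ->
  UV n m ('X^s : {poly R}) = (m == 2 ^ l + s %% 2 ^ l)%N%:R *: level_image (2 ^ l) s.
Proof.
move=> dvd_n m_lvl s_lt; have [m_ge m_lt] := andP m_lvl.
have L_gt0 : (0 < 2 ^ l)%N by rewrite expn_gt0.
have ell_m : ell m = l := trunc_log_eq (isT : (1 < 2)%N) m_lvl.
rewrite /UV ell_m mulrBl mul1r -exprD linearB /= !hadamardXn.
rewrite !coef_XnM_geomStep //; try lia.
rewrite expnS modn_double_bit modn_double_shift // /level_image.
move: (s %% 2 ^ l)%N (ltn_pmod s L_gt0) => r r_lt.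
have r_neq_m : (r == m) = false by apply/eqP; lia.
by case: odd; rewrite add0n r_neq_m scale0r ?subr0 ?sub0r ?scalerN eq_sym.
Qed.

Lemma level_sum_collapse n l s t : (2 ^ l.+1 %| n)%N -> (s < n)%N -> (t < n)%N ->
  \sum_(2 ^ l <= m < 2 ^ l.+1)
     geomX R (2 ^ ell m) * drop_poly m (UV n m 'X^s * UV n m 'X^t)
  = (s %% 2 ^ l == t %% 2 ^ l)%N%:R *:
     (geomX R (2 ^ l) * drop_poly (2 ^ l + s %% 2 ^ l)
                          (level_image (2 ^ l) s * level_image (2 ^ l) t)).
Proof.
move=> dvd_n s_lt t_lt.
rewrite (eq_big_nat _ _ (F2 := fun m => if m == (2 ^ l + s %% 2 ^ l)%N
   then (s %% 2 ^ l == t %% 2 ^ l)%N%:R *: (geomX R (2 ^ l) * drop_poly m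
          (level_image (2 ^ l) s * level_image (2 ^ l) t)) else 0)).
  rewrite -big_mkcond big_nat1_eq leq_addr expnS mul2n -addnn ltn_add2l.
  by rewrite ltn_pmod ?expn_gt0.
move=> m m_lvl; have ell_m : ell m = l := trunc_log_eq (isT : (1 < 2)%N) m_lvl.
rewrite ell_m !(UV_Xn dvd_n m_lvl) // -scalerAl -scalerAr scalerA drop_polyZ -scalerAr.
by case: eqP => [->|_]; rewrite ?mul0r ?scale0r // eqn_add2l mul1r.
Qed.

Definition coarse_prod (s t l : nat) : {poly R} :=
  if (s %% 2 ^ l == t %% 2 ^ l)%N
  then 'X^(s + t - s %% 2 ^ l) * geomX R (2 ^ l) else 0.

Lemma level_sum n l s t : (2 ^ l.+1 %| n)%N -> (s < n)%N -> (t < n)%N ->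
  \sum_(2 ^ l <= m < 2 ^ l.+1)
     geomX R (2 ^ ell m) * drop_poly m (UV n m 'X^s * UV n m 'X^t)
  = coarse_prod s t l.+1 - coarse_prod s t l.
Proof.
move=> dvd_n s_lt t_lt; rewrite level_sum_collapse // /coarse_prod /level_image.
have L_gt0 : (0 < 2 ^ l)%N by rewrite expn_gt0.
have rs_lt := ltn_pmod s L_gt0; have rt_lt := ltn_pmod t L_gt0.
have := leq_mod s (2 * 2 ^ l); have := leq_mod t (2 * 2 ^ l).
rewrite expnS !modn_double_bit mul2n -addnn geomX_add.
move: (2 ^ l)%N (s %% 2 ^ l)%N (t %% 2 ^ l)%N (geomX R (2 ^ l)) L_gt0 rs_lt rt_lt
  => L rs rt G L_gt0 rs_lt rt_lt.
case: (eqVneq rs rt) => [<-{rt rt_lt}|rs_neq_rt]; last first.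
  by case: odd; case: odd => ? ?; rewrite ifF ?scale0r ?subrr //; apply/eqP; lia.
rewrite scale1r.
case: odd; case: odd => /= t_ge s_ge.
- rewrite eqxx -exprD drop_polyXn; last by lia.
  rewrite (_ : s + t - rs = (s + t - (L + rs)) + L)%N; last by lia.
  by rewrite exprD; move: ('X^_) ('X^_) => P Q; ring.
- rewrite ifF; last by apply/eqP; lia.
  rewrite mulNr -exprD -scaleN1r drop_polyZ drop_polyXn; last by lia.
  by rewrite scaleN1r sub0r mulrN mulrC; congr (- ('X^_ * _)); lia.
- rewrite ifF; last by apply/eqP; lia.
  rewrite mulrN -exprD -scaleN1r drop_polyZ drop_polyXn; last by lia.
  by rewrite scaleN1r sub0r mulrN mulrC; congr (- ('X^_ * _)); lia.
- rewrite eqxx add0n mulrNN -exprD drop_polyXn; last by lia.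
  rewrite (_ : L + s + (L + t) - (L + rs) = (s + t - rs) + L)%N; last by lia.
  by rewrite exprD; move: ('X^_) ('X^_) => P Q; ring.
Qed.

Definition correction n (A B : {poly R}) : {poly R} :=
  \sum_(1 <= m < n) geomX R (2 ^ ell m) * drop_poly m (UV n m A * UV n m B).

Lemma correction_Xn k s t : (s < 2 ^ k)%N -> (t < 2 ^ k)%N ->
  correction (2 ^ k) 'X^s 'X^t = (s == t)%:R *: (geomX R (2 ^ k) * 'X^s) - 'X^(s + t).
Proof.
move=> s_lt t_lt; rewrite /correction big_nat_dyadic.
rewrite (telescope_sumr_eq (coarse_prod s t)) // => [|l /andP[_ l_lt]]; last first.
  by rewrite level_sum ?dvdn_exp2l.
rewrite /coarse_prod expn0 !modn1 !modn_small // eqxx subn0 geomX1 mulr1.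
by case: eqP => [<-|_]; rewrite ?scale1r ?scale0r ?addKn ?sub0r // mulrC.
Qed.

End MonomialIdentity.

Section Bilinearity.
Variables (R : comNzRingType) (n : nat).

Lemma UV_is_linear m : linear (@UV R n m).
Proof. by move=> a p q; rewrite /UV mulrDr -scalerAr linearP. Qed.

Lemma correctionC (A B : {poly R}) : correction n A B = correction n B A.
Proof.
by rewrite /correction; apply: eq_bigr => m _; rewrite [UV n m B * _]mulrC.
Qed.

Lemma correction_linearPl (B : {poly R}) a p q :
  correction n (a *: p + q) B = a *: correction n p B + correction n q B.
Proof.
rewrite /correction scaler_sumr -big_split; apply: eq_bigr => m _ /=.
by rewrite UV_is_linear mulrDl -scalerAl drop_polyD drop_polyZ mulrDr scalerAr.
Qed.

End Bilinearity.

Theorem mainTheorem2 (R : comNzRingType) (n k : nat) (A B : {poly R})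
  (hn : n = (2 ^ k)%N) (hA : size A = n) (hB : size B = n) :
  A * B = geomX R n * hadamard A B
          - \sum_(1 <= m < n)
              geomX R (2 ^ ell m) * drop_poly m (UV n m A * UV n m B).
Proof.
subst n.
pose D (p q : {poly R}) :=
  p * q - geomX R (2 ^ k) * hadamard p q + correction (2 ^ k) p q.
suff D0 : D A B = 0 by apply/subr0_eq; rewrite opprB addrA addrAC.
apply: (@symmetric_bilinear_poly_eq0 _ _ D (2 ^ k)); rewrite ?hA ?hB //.
- move=> q a p1 p2; rewrite /D correction_linearPl !(hadamardC _ q).
  by rewrite hadamard_is_linear -!mul_polyC; ring.
- by move=> p q; rewrite /D mulrC hadamardC correctionC.
- move=> s t s_lt t_lt; rewrite /D correction_Xn // hadamardXn coefXn -exprD.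
  by case: eqVneq => [->|_]; rewrite ?scale1r ?scale0r; ring.
Qed.
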